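(* Let $(E\to M,\rho,\langle\cdot,\cdot\rangle,\circ)$ be a Courant algebroid and $(\mathbf I,\mathbf J,\mathbf K)$ an almost hypercomplex structure on $E$. If there exists a hypercomplex connection $\nabla$ satisfying $\nabla\mathbf I=\nabla\mathbf J=\nabla\mathbf K=0$ and, for all $X,Y\in\Gamma(E)$, $$T(X,Y)=\mathbf ID\langle X,\mathbf IY\rangle+\mathbf JD\langle X,\mathbf JY\rangle+\mathbf KD\langle X,\mathbf KY\rangle,$$ then $N_{\mathbf I,\mathbf J}=0$.
   Context: A Courant algebroid $(E\to M,\rho,\langle\cdot,\cdot\rangle,\circ)$ consists of a real vector bundle $E\to M$ over a smooth manifold, a nondegenerate symmetric fiberwise bilinear pairing $\langle\cdot,\cdot\rangle$ on $E$, a vector bundle map $\rho:E\to TM$ (the anchor), and an $\mathbb R$-bilinear operation $\circ$ on $\Gamma(E)$ (the Dorfman bracket) such that for all $f\in C^\infty(M)$, $x,y,z\in\Gamma(E)$: $x\circ(y\circ z)=(x\circ y)\circ z+y\circ(x\circ z)$; $\rho(x\circ y)=[\rho(x),\rho(y)]$; $x\circ(fy)=(\rho(x)f)y+f(x\circ y)$; $x\circ y+y\circ x=2D\langle x,y\rangle$; $(Df)\circ x=0$; $\rho(x)\langle y,z\rangle=\langle x\circ y,z\rangle+\langle y,x\circ z\rangle$. Here $D:C^\infty(M)\to\Gamma(E)$ is the $\mathbb R$-linear map defined by $\langle Df,x\rangle=\tfrac12\rho(x)f$. The Courant bracket is $[\![x,y]\!]=\tfrac12(x\circ y-y\circ x)$.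 For vector bundle endomorphisms $F,G$ of $E$ (over $\mathrm{id}_M$), the Nijenhuis concomitant is the tensor $N_{F,G}:E\otimes E\to E$ given by $N_{F,G}(X,Y)=FX\circ GY-F(X\circ GY)-G(FX\circ Y)+FG(X\circ Y)+GX\circ FY-G(X\circ FY)-F(GX\circ Y)+GF(X\circ Y)$. An almost hypercomplex structure on $E$ is a triple $(\mathbf I,\mathbf J,\mathbf K)$ of vector bundle endomorphisms of $E$ over $\mathrm{id}_M$, each orthogonal for $\langle\cdot,\cdot\rangle$, with $\mathbf I^2=\mathbf J^2=\mathbf K^2=\mathbf I\mathbf J\mathbf K=-1$. Given an almost hypercomplex structure, for $f\in C^\infty(M)$ and $X,Y\in\Gamma(E)$ set $\Delta_f(X,Y)=\langle X,Y\rangle Df+\langle\mathbf IX,Y\rangle\mathbf I Df+\langle\mathbf JX,Y\rangle\mathbf JDf+\langle\mathbf KX,Y\rangle\mathbf KDf$. A hypercomplex connection is an $\mathbb R$-bilinear map $\Gamma(E)\times\Gamma(E)\to\Gamma(E)$, $(X,Y)\mapsto\nabla_XY$, with $\nabla_{fX}Y=f\nabla_XY$ and $\nabla_X(fY)=(\rho(X)f)Y+f\nabla_XY-\Delta_f(X,Y)$. Its torsion is $T(X,Y)=\nabla_XY-\nabla_YX-[\![X,Y]\!]$. For an endomorphism $P$ of $E$, $(\nabla_XP)Y:=\nabla_X(PY)-P(\nabla_XY)$, and $\nabla P=0$ means this vanishes for all $X,Y$. *)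

(* Algebraic model of a Courant algebroid:
   A  = C^oo(M) as a commutative R-algebra (R a real field, generalizing the reals),
   S  = Gamma(E) as an A-module, vector fields on M = R-linear derivations of A. *)
From HB Require Import structures.
From mathcomp Require Import all_boot all_order all_algebra.
Set Implicit Arguments. Unset Strict Implicit. Unset Printing Implicit Defensive.
Import Order.TTheory GRing.Theory Num.Theory.
Local Open Scope ring_scope.

Section Courant.
Variables (R : realFieldType) (A : comAlgType R) (S : lmodType A).

Definition half : A := (2^-1 : R)%:A.

Definition is_vector_field (v : A -> A) : Prop :=
  [/\ forall f g, v (f + g) = v f + v g,
      forall (r : R) f, v (r *: f) = r *: v f
    & forall f g, v (f * g) = f * v g + v f * g].

Record courant_algebroid (pair : S -> S -> A) (rho : S -> A -> A)
    (dorf : S -> S -> S) (D : A -> S) : Prop := {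
  ca_pair_sym : forall x y, pair x y = pair y x;
  ca_pair_lin : forall (a : A) x y z, pair (a *: x + y) z = a * pair x z + pair y z;
  ca_pair_nondeg : forall x, (forall y, pair x y = 0) -> x = 0;
  ca_rho_lin : forall (a : A) x y f, rho (a *: x + y) f = a * rho x f + rho y f;
  ca_rho_vf : forall x, is_vector_field (rho x);
  ca_dorf_linl : forall (r : R) x y z,
      dorf ((r%:A : A) *: x + y) z = (r%:A : A) *: dorf x z + dorf y z;
  ca_dorf_linr : forall (r : R) x y z,
      dorf z ((r%:A : A) *: x + y) = (r%:A : A) *: dorf z x + dorf z y;
  ca_D_def : forall f x, pair (D f) x = half * rho x f;
  ca_jacobi : forall x y z, dorf x (dorf y z) = dorf (dorf x y) z + dorf y (dorf x z);
  ca_anchor_hom : forall x y f, rho (dorf x y) f = rho x (rho y f) - rho y (rho x f);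
  ca_leibniz : forall (f : A) x y, dorf x (f *: y) = rho x f *: y + f *: dorf x y;
  ca_sym : forall x y, dorf x y + dorf y x = (2%:R : A) *: D (pair x y);
  ca_Dleft : forall f x, dorf (D f) x = 0;
  ca_invariance : forall x y z, rho x (pair y z) = pair (dorf x y) z + pair y (dorf x z)
}.

(* vector bundle endomorphism over id_M = C^oo(M)-linear map of sections *)
Definition bundle_endo (F : S -> S) : Prop :=
  forall (a : A) x y, F (a *: x + y) = a *: F x + F y.

Definition orthogonal (pair : S -> S -> A) (F : S -> S) : Prop :=
  forall x y, pair (F x) (F y) = pair x y.

Definition almost_hypercomplex (pair : S -> S -> A) (I J K : S -> S) : Prop :=
  [/\ bundle_endo I /\ bundle_endo J /\ bundle_endo K,
      orthogonal pair I /\ orthogonal pair J /\ orthogonal pair K,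
      (forall x, I (I x) = - x) /\ (forall x, J (J x) = - x) /\ (forall x, K (K x) = - x)
    & forall x, I (J (K x)) = - x].

Definition Delta (pair : S -> S -> A) (D : A -> S) (I J K : S -> S) (f : A) (X Y : S) : S :=
  pair X Y *: D f + pair (I X) Y *: I (D f) + pair (J X) Y *: J (D f)
  + pair (K X) Y *: K (D f).

Definition hypercomplex_connection (pair : S -> S -> A) (rho : S -> A -> A)
    (D : A -> S) (I J K : S -> S) (nabla : S -> S -> S) : Prop :=
  [/\ forall (r : R) x y z,
        nabla ((r%:A : A) *: x + y) z = (r%:A : A) *: nabla x z + nabla y z,
      forall (r : R) x y z,
        nabla z ((r%:A : A) *: x + y) = (r%:A : A) *: nabla z x + nabla z y,
      forall (f : A) X Y, nabla (f *: X) Y = f *: nabla X Y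
    & forall (f : A) X Y,
        nabla X (f *: Y) = rho X f *: Y + f *: nabla X Y - Delta pair D I J K f X Y].

Definition courant_bracket (dorf : S -> S -> S) (x y : S) : S :=
  half *: (dorf x y - dorf y x).

Definition torsion (dorf : S -> S -> S) (nabla : S -> S -> S) (X Y : S) : S :=
  nabla X Y - nabla Y X - courant_bracket dorf X Y.

Definition cov_deriv (nabla : S -> S -> S) (P : S -> S) (X Y : S) : S :=
  nabla X (P Y) - P (nabla X Y).

Definition nijenhuis (dorf : S -> S -> S) (F G : S -> S) (X Y : S) : S :=
  dorf (F X) (G Y) - F (dorf X (G Y)) - G (dorf (F X) Y) + F (G (dorf X Y))
  + dorf (G X) (F Y) - G (dorf X (F Y)) - F (dorf (G X) Y) + G (F (dorf X Y)).

End Courant.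

From Pilot Require Import Defs.
From HB Require Import structures.
From mathcomp Require Import all_boot all_order all_algebra.
Import Order.TTheory GRing.Theory Num.Theory.
Set Implicit Arguments. Unset Strict Implicit.
Local Open Scope ring_scope.

(* The Courant bracket is [[X,Y]] = X o Y - D<X,Y>, so the
   torsion hypothesis expresses the Dorfman bracket through the connection:
       X o Y = nabla_X Y - nabla_Y X + sigma(X,Y),
       sigma(X,Y) = D<X,Y> - (I D<X,IY> + J D<X,JY> + K D<X,KY>).
   The correction sigma commutes with I and with J in its second slot (this
   uses only the quaternion relations and the additivity of D and <.,.>).
   On the other hand, for any endomorphisms F, G the Nijenhuis concomitant of
   a bracket is a combination of its "right defects" b(U,PV) - P b(U,V),
   P = F, G.  For a bracket of the shape nabla_X Y - nabla_Y X + sigma(X,Y)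
   with nabla and sigma commuting with F and G in the second slot, the right
   defect of P is P nabla_V U - nabla_{PV} U, and the resulting eight terms
   of N_{F,G} cancel pairwise.  Applying this with F = I, G = J gives the
   theorem. *)

Lemma sub_swap (V : zmodType) (a b c d : V) : a - b - c + d = a - c - (b - d).
Proof. by rewrite opprB addrA [RHS]addrAC (addrAC a). Qed.

Lemma sub_group4 (V : zmodType) (a b c d e f g h : V) :
  a - b - c + d + e - f - g + h = (a - b - c + d) + (e - f - g + h).
Proof. by rewrite !addrA. Qed.

Lemma sub_cancel_common (V : zmodType) (x y z w : V) :
  x - y + z - (x - w + z) = w - y.
Proof.
by rewrite [x - y + z]addrAC [x - w + z]addrAC opprB (addrC (x + z - y)) subrKA.
Qed.

Lemma sub_opp_rotate (V : zmodType) (x y z w : V) :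
  x - (- y + - z + w) = y - (- x + w + - z).
Proof. by rewrite !opprD !opprK -!addrA (addrCA x y) (addrC (- w)). Qed.

Lemma sub_solve (V : zmodType) (x a d : V) : x = a + (d - (a - (x - d))).
Proof. by rewrite opprB (addrA d) (addrC d) subrK (addrC a) subrK. Qed.

Section SubMorphism.
Variables (U V : zmodType) (phi : U -> V).
Hypothesis phiB : {morph phi : x y / x - y}.

Lemma sub_morph0 : phi 0 = 0.
Proof. by have := phiB 0 0; rewrite !subrr. Qed.

Lemma sub_morphN : {morph phi : x / - x}.
Proof. by move=> x; rewrite -sub0r phiB sub_morph0 sub0r. Qed.

Lemma sub_morphD : {morph phi : x y / x + y}.
Proof. by move=> x y; rewrite -{1}(opprK y) phiB sub_morphN opprK. Qed.

End SubMorphism.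

Section NijenhuisDefect.
Variables (R : realFieldType) (A : comAlgType R) (S : lmodType A).

Lemma endoB (P : S -> S) : bundle_endo P -> {morph P : x y / x - y}.
Proof. by move=> eP x y; rewrite addrC -scaleN1r eP scaleN1r addrC. Qed.

Variables F G : S -> S.
Hypotheses (eF : bundle_endo F) (eG : bundle_endo G).

Definition right_defect (b : S -> S -> S) (P : S -> S) (U V : S) : S :=
  b U (P V) - P (b U V).

Lemma nijenhuis_right_defect (b : S -> S -> S) X Y :
  nijenhuis b F G X Y =
    right_defect b G (F X) Y - F (right_defect b G X Y)
    + (right_defect b F (G X) Y - G (right_defect b F X Y)).
Proof.
by rewrite /nijenhuis sub_group4 !sub_swap /right_defect (endoB eF) (endoB eG).
Qed.

Lemma right_defect_split (b n c : S -> S -> S) (P : S -> S) :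
  bundle_endo P ->
  (forall U V, b U V = n U V - n V U + c U V) ->
  (forall U V, n U (P V) = P (n U V)) ->
  (forall U V, c U (P V) = P (c U V)) ->
  forall U V, right_defect b P U V = P (n V U) - n (P V) U.
Proof.
move=> eP bE nP cP U V.
rewrite /right_defect !bE nP cP (sub_morphD (endoB eP)) (endoB eP).
exact: sub_cancel_common.
Qed.

(* The Nijenhuis concomitant of such a bracket vanishes: once n is moved past
   F and G, the four right-defect terms cancel pairwise. *)
Lemma nijenhuis_parallel_split (b n c : S -> S -> S) :
  (forall U V, b U V = n U V - n V U + c U V) ->
  (forall U V, n U (F V) = F (n U V)) -> (forall U V, n U (G V) = G (n U V)) ->
  (forall U V, c U (F V) = F (c U V)) -> (forall U V, c U (G V) = G (c U V)) ->
  forall X Y, nijenhuis b F G X Y = 0.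
Proof.
move=> bE nF nG cF cG X Y.
rewrite nijenhuis_right_defect !(right_defect_split _ bE) //.
by rewrite !nF !nG (endoB eF) (endoB eG) !opprB !subrKA subrr.
Qed.

End NijenhuisDefect.

Section Quaternion.
Variables (R : realFieldType) (A : comAlgType R) (S : lmodType A).
Variables (pair : S -> S -> A) (I J K : S -> S).
Hypothesis HH : almost_hypercomplex pair I J K.

Lemma hc_endoI : bundle_endo I. Proof. by case: HH => [[]]. Qed.
Lemma hc_endoJ : bundle_endo J. Proof. by case: HH => [[_ []]]. Qed.
Lemma hc_endoK : bundle_endo K. Proof. by case: HH => [[_ []]]. Qed.
Lemma hc_II x : I (I x) = - x. Proof. by case: HH => _ _ []. Qed.
Lemma hc_JJ x : J (J x) = - x. Proof. by case: HH => _ _ [_ []]. Qed.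
Lemma hc_KK x : K (K x) = - x. Proof. by case: HH => _ _ [_ []]. Qed.

Let IN := sub_morphN (endoB hc_endoI).
Let JN := sub_morphN (endoB hc_endoJ).

Lemma hc_IJ x : I (J x) = K x.
Proof.
case: HH => _ _ _ IJK.
by apply: oppr_inj; rewrite -[- K x](IJK (K x)) hc_KK JN IN.
Qed.

Lemma hc_JK x : J (K x) = I x.
Proof.
case: HH => _ _ _ IJK.
by apply: oppr_inj; rewrite -IN -(IJK x) hc_II.
Qed.

Lemma hc_IK x : I (K x) = - J x.
Proof. by rewrite -hc_IJ hc_II. Qed.

Lemma hc_JI x : J (I x) = - K x.
Proof. by rewrite -hc_JK hc_JJ. Qed.

Lemma hc_KI x : K (I x) = J x.
Proof. by rewrite -hc_IJ hc_JI IN hc_IK opprK. Qed.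

Lemma hc_KJ x : K (J x) = - I x.
Proof. by rewrite -hc_IJ hc_JJ IN. Qed.

End Quaternion.

Section CourantAlgebra.
Variables (R : realFieldType) (A : comAlgType R) (S : lmodType A).
Variables (pair : S -> S -> A) (rho : S -> A -> A) (dorf : S -> S -> S)
  (D : A -> S).
Hypothesis HC : courant_algebroid pair rho dorf D.

Lemma pair_subl z : {morph pair^~ z : x y / x - y}.
Proof.
by move=> x y /=; rewrite addrC -scaleN1r (ca_pair_lin HC) mulN1r addrC.
Qed.

Lemma pair_oppr u w : pair u (- w) = - pair u w.
Proof.
by rewrite (ca_pair_sym HC) (sub_morphN (pair_subl u)) (ca_pair_sym HC).
Qed.

Lemma rho_sub x : {morph rho x : f g / f - g}.
Proof.
move=> f g; case: (ca_rho_vf HC x) => rhoD rhoZ _.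
by rewrite -scaleN1r rhoD rhoZ !scaleN1r.
Qed.

(* D is additive, by nondegeneracy of the pairing. *)
Lemma D_sub : {morph D : f g / f - g}.
Proof.
move=> f g; apply/subr0_eq/(ca_pair_nondeg HC) => y.
by rewrite !pair_subl !(ca_D_def HC) rho_sub mulrBr subrr.
Qed.

Lemma D_opp f : D (- f) = - D f.
Proof. exact: (sub_morphN D_sub). Qed.

Lemma courant_bracketE x y : courant_bracket dorf x y = dorf x y - D (pair x y).
Proof.
rewrite /courant_bracket.
have half2 : @Defs.half R A * 2%:R = 1.
  rewrite /Defs.half -scalerAl mul1r -(scaler_nat 2 (1 : A)) scalerA.
  by rewrite mulVf ?pnatr_eq0 // scale1r.
have -> : dorf y x = 2%:R *: D (pair x y) - dorf x y.
  by rewrite -(ca_pair_sym HC y x) -(ca_sym HC) addrK.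
rewrite opprB addrA -mulr2n -scaler_nat -scalerBr scalerA.
by rewrite half2 scale1r.
Qed.

End CourantAlgebra.

Section HypercomplexCorrection.
Variables (R : realFieldType) (A : comAlgType R) (S : lmodType A).
Variables (pair : S -> S -> A) (D : A -> S).
Hypotheses (pair_oppr : forall u w, pair u (- w) = - pair u w)
  (D_opp : forall f, D (- f) = - D f).

Definition hyper_correction (P Q T : S -> S) (U V : S) : S :=
  D (pair U V)
  - (P (D (pair U (P V))) + Q (D (pair U (Q V))) + T (D (pair U (T V)))).

Lemma hyper_correction_cycle P Q T U V :
  hyper_correction Q T P U V = hyper_correction P Q T U V.
Proof. by rewrite /hyper_correction; congr (_ - _); rewrite addrC addrA. Qed.

Lemma hyper_correction_equivariant (P Q T : S -> S) :
  bundle_endo P -> bundle_endo Q ->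
  (forall x, P (P x) = - x) -> (forall x, P (Q x) = T x) ->
  (forall x, P (T x) = - Q x) -> (forall x, Q (P x) = - T x) ->
  (forall x, T (P x) = Q x) ->
  forall U V, hyper_correction P Q T U (P V) = P (hyper_correction P Q T U V).
Proof.
move=> eP eQ PP PQ PT QP TP U V.
have PN := sub_morphN (endoB eP); have QN := sub_morphN (endoB eQ).
rewrite /hyper_correction PP QP TP !pair_oppr !D_opp PN QN.
rewrite (endoB eP) !(sub_morphD (endoB eP)) PP PQ PT.
exact: sub_opp_rotate.
Qed.

End HypercomplexCorrection.

Lemma dorf_torsion_split (R : realFieldType) (A : comAlgType R) (S : lmodType A)
    (pair : S -> S -> A) (rho : S -> A -> A) (dorf : S -> S -> S) (D : A -> S)
    (I J K : S -> S) (nabla : S -> S -> S) :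
  courant_algebroid pair rho dorf D ->
  (forall X Y, torsion dorf nabla X Y =
     I (D (pair X (I Y))) + J (D (pair X (J Y))) + K (D (pair X (K Y)))) ->
  forall U V, dorf U V = nabla U V - nabla V U + hyper_correction pair D I J K U V.
Proof.
move=> HC HT U V.
rewrite /hyper_correction -HT /torsion (courant_bracketE HC).
exact: sub_solve.
Qed.

Theorem mainTheorem7 (R : realFieldType) (A : comAlgType R) (S : lmodType A)
    (pair : S -> S -> A) (rho : S -> A -> A) (dorf : S -> S -> S) (D : A -> S)
    (I J K : S -> S) :
  courant_algebroid pair rho dorf D ->
  almost_hypercomplex pair I J K ->
  (exists nabla : S -> S -> S,
      [/\ hypercomplex_connection pair rho D I J K nabla,
          forall X Y, cov_deriv nabla I X Y = 0,
          forall X Y, cov_deriv nabla J X Y = 0,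
          forall X Y, cov_deriv nabla K X Y = 0
        & forall X Y, torsion dorf nabla X Y =
            I (D (pair X (I Y))) + J (D (pair X (J Y))) + K (D (pair X (K Y)))]) ->
  forall X Y, nijenhuis dorf I J X Y = 0.
Proof.
move=> HC HH [nabla [_ nablaI nablaJ _ HT]].
have parallel P : (forall X Y, cov_deriv nabla P X Y = 0) ->
    forall X Y, nabla X (P Y) = P (nabla X Y).
  by move=> nablaP X Y; apply/subr0_eq/nablaP.
have eI := hc_endoI HH; have eJ := hc_endoJ HH; have eK := hc_endoK HH.
apply: (nijenhuis_parallel_split eI eJ (dorf_torsion_split HC HT)).
- exact: parallel.
- exact: parallel.
- apply: (hyper_correction_equivariant (pair_oppr HC) (D_opp HC) eI eJ).
  + exact: hc_II HH.
  + exact: hc_IJ HH.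
  + exact: hc_IK HH.
  + exact: hc_JI HH.
  + exact: hc_KI HH.
- move=> U V; rewrite -!(hyper_correction_cycle _ _ I J K).
  apply: (hyper_correction_equivariant (pair_oppr HC) (D_opp HC) eJ eK).
  + exact: hc_JJ HH.
  + exact: hc_JK HH.
  + exact: hc_JI HH.
  + exact: hc_KJ HH.
  + exact: hc_IJ HH.
Qed.
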